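(* Let $m_\infty(0,0)=(\mu_{ij})_{0\le i,j<\infty}$ be a semi-infinite complex matrix, let $\Lambda$ be the semi-infinite shift matrix $\Lambda_{ij}=\delta_{j-i,1}$, and set $m_\infty(t,s)=e^{\sum_{i\ge1}t_i\Lambda^i}\,m_\infty(0,0)\,e^{-\sum_{i\ge1}s_i\Lambda^{\top i}}$ and $\tau_n(t,s)=\det m_n(t,s)$, where $m_n(t,s)$ is the upper-left $n\times n$ block of $m_\infty(t,s)$. Then for $n>0$, $$\tau_n(t,s)=\sum_{\lambda,\nu}\det\big(m^{\lambda,\nu}\big)\,s_\lambda(t)\,s_\nu(-s),\qquad m^{\lambda,\nu}=\big(\mu_{\lambda_i-i+n,\;\nu_j-j+n}\big)_{1\le i,j\le n},$$ the sum being over all Young diagrams $\lambda,\nu$ with at most $n$ rows.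
   Context: Schur polynomials: $e^{\sum_{i\ge1}t_iz^i}=\sum_{k\ge0}p_k(t)z^k$, $p_k=0$ for $k<0$; for a Young diagram $\lambda_1\ge\dots\ge\lambda_n\ge0$, $s_\lambda(t)=\det(p_{\lambda_i-i+j}(t))_{1\le i,j\le n}$. Everything is understood as formal power series in $t=(t_1,t_2,\dots)$, $s=(s_1,s_2,\dots)$. *)

(* Formal power series in t = (t_1,t_2,...), s = (s_1,s_2,...)
   are handled through their weighted truncations (weight of t_i and s_i is i):
   a formal power series identity F = G holds iff for every D, the coefficients
   of all monomials of weight <= D agree; these coefficients only involve the
   variables t_1..t_D, s_1..s_D, which we model in the polynomial ring
   {mpoly CC[D + D]} (variable k < D is t_(k+1), variable D + k is s_(k+1)). *)
From HB Require Import structures.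
From mathcomp Require Import all_boot all_algebra.
From mathcomp Require Import Rstruct complex.
From mathcomp Require Import mpoly.
Set Implicit Arguments. Unset Strict Implicit. Unset Printing Implicit Defensive.
Import GRing.Theory.
Local Open Scope ring_scope.

Definition CC : numClosedFieldType := complex Rdefinitions.R.

(* p_k(x) = coefficient of z^k in exp(sum_{i>=1} x_i z^i)
          = sum_{j <= k} (1/j!) [z^k] (sum_{1 <= i <= k} x_i z^i)^j   (x 0 unused) *)
Definition pk (F : fieldType) (A : comAlgType F) (x : nat -> A) (k : nat) : A :=
  let X : {poly A} := \sum_(1 <= i < k.+1) (x i)%:P * 'X^i in
  \sum_(j < k.+1) ((j`!)%:R^-1 : F) *: (X ^+ j)`_k.

Definition pkz (F : fieldType) (A : comAlgType F) (x : nat -> A) (k : int) : A :=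
  match k with Posz m => pk x m | Negz _ => 0 end.

(* Schur polynomial s_lam(x) = det (p_{lam_i - i + j}(x))_{1 <= i,j <= n}
   (0-based indices here: lam_i - i + j is unchanged). *)
Definition schur (F : fieldType) (A : comAlgType F) (n : nat) (lam : 'I_n -> nat)
    (x : nat -> A) : A :=
  \det (\matrix_(i < n, j < n) pkz x ((lam i)%:Z - (i : nat)%:Z + (j : nat)%:Z)).

Definition tvar (D : nat) (i : nat) : {mpoly CC[D + D]} :=
  if (0 < i <= D)%N then oapp (fun k : 'I_(D + D) => 'X_k) 0 (insub i.-1) else 0.
Definition svar (D : nat) (i : nat) : {mpoly CC[D + D]} :=
  if (0 < i <= D)%N then oapp (fun k : 'I_(D + D) => 'X_k) 0 (insub (D + i.-1)%N) else 0.

Definition weight (D : nat) (m : 'X_{1..D + D}) : nat :=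
  \sum_(k < D + D) (if (k < D)%N then k.+1 else (k - D).+1) * m k.

(* entry (i,k) of exp(sum_l x_l Lambda^l) = sum_r p_r(x) Lambda^r, i.e. p_{k-i}(x) *)
Definition expLam (D : nat) (x : nat -> {mpoly CC[D + D]}) (i k : nat) : {mpoly CC[D + D]} :=
  pkz x (k%:Z - i%:Z).

(* upper-left n x n block of m_oo(t,s) = exp(sum t_l Lambda^l) m_oo(0,0) exp(-sum s_l Lambda^T^l),
   with the (infinite, formally convergent) inner sums truncated to indices < n + D;
   the omitted terms have weight > D. *)
Definition mts (D : nat) (mu : nat -> nat -> CC) (n : nat) : 'M[{mpoly CC[D + D]}]_n :=
  \matrix_(i < n, j < n)
     \sum_(k < n + D) \sum_(l < n + D)
        expLam (tvar D) i k * (mu k l)%:MP * expLam (fun r => - svar D r) j l.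

(* Young diagrams with at most n rows, encoded as nonincreasing n-tuples
   lam_1 >= ... >= lam_n >= 0 (parts bounded by D in the truncation) *)
Definition young (n D : nat) (lam : {ffun 'I_n -> 'I_D.+1}) : bool :=
  [forall i : 'I_n, forall j : 'I_n, (i <= j)%N ==> (lam j <= lam i)%N].

(* m^{lam,nu} = (mu_{lam_i - i + n, nu_j - j + n})_{1 <= i,j <= n}  (0-based: lam_i + (n - 1 - i)) *)
Definition mlamnu (mu : nat -> nat -> CC) (n : nat) (lam nu : 'I_n -> nat) : 'M[CC]_n :=
  \matrix_(i < n, j < n) mu (lam i + (n - i.+1))%N (nu j + (n - j.+1))%N.

(* truncation of  sum_{lam,nu} det(m^{lam,nu}) s_lam(t) s_nu(-s)  to diagrams with
   parts <= D (the omitted terms have weight > D) *)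
Definition rhs (D : nat) (mu : nat -> nat -> CC) (n : nat) : {mpoly CC[D + D]} :=
  \sum_(lam : {ffun 'I_n -> 'I_D.+1} | young lam)
   \sum_(nu : {ffun 'I_n -> 'I_D.+1} | young nu)
     (\det (mlamnu mu (fun i => (lam i : nat)) (fun j => (nu j : nat))))%:MP
     * schur (fun i => (lam i : nat)) (tvar D)
     * schur (fun j => (nu j : nat)) (fun r => - svar D r).

From mathcomp Require Import all_boot all_algebra all_fingroup.
From mathcomp Require Import mpoly.
From mathcomp Require Import zify.
Set Implicit Arguments. Unset Strict Implicit. Unset Printing Implicit Defensive.
Import GRing.Theory.
Local Open Scope ring_scope.

(* The matrix m_n(t,s) is the product of the n x oo matrix (p_(k-i)(t)), the
   moment matrix (mu_kl) and the oo x n matrix (p_(l-j)(-s)).  Two applications of the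
   Cauchy-Binet formula expand its determinant over pairs of strictly decreasing index
   sequences k_1 > ... > k_n, which are exactly the sequences lambda_i - i + n of Young
   diagrams lambda with at most n rows.  The corresponding minors of the outer factors are
   the Jacobi-Trudi determinants s_lambda(t) and s_nu(-s), both up to the sign of the
   reversal of columns, and the minor of the moment matrix is det m^(lambda,nu).  At
   truncation level D only indices k < n + D occur, i.e. diagrams with parts <= D, so the
   truncated identity holds exactly. *)

Section DecreasingMaps.
Variables n N : nat.
Implicit Types (f g : {ffun 'I_n -> 'I_N}) (s : 'S_n).

Definition decreasing f : bool :=
  [forall i : 'I_n, forall j : 'I_n, (i < j)%N ==> (f j < f i)%N].

Lemma decreasingP f : reflect {homo f : i j / (i < j)%N >-> (j < i)%N} (decreasing f).
Proof.
apply: (iffP forallP) => [dec i j ij | dec i].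
  by have /forallP/(_ j)/implyP := dec i; apply.
by apply/forallP => j; apply/implyP/dec.
Qed.

Lemma decreasing_ltn f i j : decreasing f -> (f i < f j)%N = (j < i)%N.
Proof.
move/decreasingP => dec; case: (ltngtP j i) => [/dec // | /dec lt_fji | /val_inj ->].
  by apply/negbTE; rewrite -leqNgt ltnW.
by rewrite ltnn.
Qed.

Lemma decreasing_inj f : decreasing f -> injective f.
Proof.
move=> dec i j fij; apply: val_inj.
case: (ltngtP i j) => // lt;
  [move: (decreasing_ltn j i dec) | move: (decreasing_ltn i j dec)]; by rewrite fij ltnn lt.
Qed.

Lemma decreasing_gap f (i j : 'I_n) :
  decreasing f -> (i <= j)%N -> (f j + (j - i) <= f i)%N.
Proof.
move/decreasingP => dec; case: j => j; elim: j => [|j IH] lt_jn /= le_ij.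
  have -> : i = Ordinal lt_jn by apply: val_inj => /=; lia.
  by rewrite subnn addn0.
case: (ltngtP i j.+1) le_ij => // [lt_ij _ | eq_ij _].
  have := IH (ltnW lt_jn) lt_ij.
  have := dec (Ordinal (ltnW lt_jn)) (Ordinal lt_jn) (ltnSn j); rewrite /=; lia.
have -> : i = Ordinal lt_jn by apply: val_inj.
by rewrite subnn addn0.
Qed.

(* [rank f i] is the position of [f i] in the decreasing list of values of [f]; an
   injective [f] is thus [sort_ffun f] (decreasing) composed with [rank_perm f]. *)
Definition rank f (i : 'I_n) : nat := #|[pred j | (f i < f j)%N]|.

Lemma rank_lt f i : (rank f i < n)%N.
Proof.
rewrite -[n]card_ord; apply/proper_card/properP; split; first exact/subsetP.
by exists i; rewrite // inE ltnn.
Qed.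

Lemma rank_decr f a b : (f a < f b)%N -> (rank f b < rank f a)%N.
Proof.
move=> ab; apply/proper_card/properP; split.
  by apply/subsetP => j; rewrite !inE; apply: ltn_trans.
by exists b; rewrite !inE ?ab ?ltnn.
Qed.

Lemma ltn_rank f a b : (rank f a < rank f b)%N = (f b < f a)%N.
Proof.
case: (ltngtP (f a) (f b)) => [/rank_decr lt_ba | /rank_decr // | eq_ab].
  by apply/negbTE; rewrite -leqNgt ltnW.
have -> : rank f a = rank f b by apply: eq_card => j; rewrite !inE eq_ab.
by rewrite ltnn.
Qed.

Lemma rank_inj f : injective f -> injective (rank f).
Proof.
move=> finj a b rab; apply: finj; apply: val_inj.
by case: (ltngtP (f a) (f b)) => // /rank_decr; rewrite rab ltnn.
Qed.

Lemma card_ord_lt m : (m <= n)%N -> #|[pred k : 'I_n | (k < m)%N]| = m.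
Proof. by move=> le_mn; rewrite -sum1_card (big_ord_narrow le_mn) sum1_card card_ord. Qed.

Lemma rank_comp g s i : decreasing g -> rank [ffun j => g (s j)] i = s i.
Proof.
move=> dec.
rewrite /rank (@eq_card _ _ [preim s of [pred k : 'I_n | (k < s i)%N]]) => [|j]; last first.
  by rewrite !inE !ffunE decreasing_ltn.
rewrite (card_preim (@perm_inj _ s)) -[X in _ = X](card_ord_lt (ltnW (ltn_ord (s i)))).
by apply: eq_card => k; rewrite !inE perm_onto.
Qed.

Definition rank_perm f : 'S_n := insubd (1%g : 'S_n) [ffun i => Ordinal (rank_lt f i)].

Lemma rank_permE f i : injective f -> rank_perm f i = rank f i :> nat.
Proof.
move=> finj; have rank_injb : injectiveb [ffun i => Ordinal (rank_lt f i)].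
  by apply/injectiveP => a b; rewrite !ffunE => /(congr1 val) /rank_inj; apply.
by rewrite /rank_perm -pvalE insubdK // ffunE.
Qed.

Definition sort_ffun f : {ffun 'I_n -> 'I_N} := [ffun r => f ((rank_perm f)^-1 r)%g].

Lemma decreasing_sort_ffun f : injective f -> decreasing (sort_ffun f).
Proof.
move=> finj; apply/decreasingP => a b ab; rewrite !ffunE.
by rewrite -ltn_rank -!rank_permE // !permKV.
Qed.

Lemma sort_ffun_rank_perm f : injective f -> [ffun i => sort_ffun f (rank_perm f i)] = f.
Proof. by move=> finj; apply/ffunP => i; rewrite !ffunE permK. Qed.

Lemma rank_perm_comp g s : decreasing g -> rank_perm [ffun i => g (s i)] = s.
Proof.
move=> dec; have inj_gs : injective [ffun i => g (s i)].
  by move=> a b; rewrite !ffunE => /(decreasing_inj dec)/perm_inj.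
by apply/permP => i; apply: val_inj; rewrite /= rank_permE // rank_comp.
Qed.

Lemma sort_ffun_comp g s : decreasing g -> sort_ffun [ffun i => g (s i)] = g.
Proof. by move=> dec; apply/ffunP => r; rewrite !ffunE rank_perm_comp // permKV. Qed.

Lemma big_injective_decreasing (R : Type) (idx : R) (op : Monoid.com_law idx)
    (F : {ffun 'I_n -> 'I_N} -> R) :
  \big[op/idx]_(f : {ffun 'I_n -> 'I_N} | injectiveb f) F f =
  \big[op/idx]_(g | decreasing g) \big[op/idx]_(s : 'S_n) F [ffun i => g (s i)].
Proof.
pose comp (p : {ffun 'I_n -> 'I_N} * 'S_n) := [ffun i => p.1 (p.2 i)].
rewrite pair_big_dep (reindex_onto comp (fun f => (sort_ffun f, rank_perm f))).
  2: by move=> f /injectiveP; apply: sort_ffun_rank_perm.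
apply: eq_bigl => -[g s] /=; rewrite andbT.
apply/andP/idP => [[/injectiveP finj /eqP [<- _]] | dec].
  exact: decreasing_sort_ffun.
split; last by rewrite sort_ffun_comp // rank_perm_comp.
by apply/injectiveP => a b; rewrite !ffunE => /(decreasing_inj dec)/perm_inj.
Qed.

End DecreasingMaps.

Section CauchyBinet.
Variable R : comPzRingType.

Lemma det_row_perm n (s : 'S_n) (A : 'M[R]_n) : \det (row_perm s A) = (-1) ^+ s * \det A.
Proof. by rewrite row_permE det_mulmx det_perm. Qed.

Lemma det_col_perm n (s : 'S_n) (A : 'M[R]_n) : \det (col_perm s A) = (-1) ^+ s * \det A.
Proof. by rewrite -det_tr tr_col_perm det_row_perm det_tr. Qed.

Variables n N : nat.
Implicit Types (A : 'M[R]_(n, N)) (B : 'M[R]_(N, n)).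

Lemma det_mulmx_expand A B :
  \det (A *m B) = \sum_(f : {ffun 'I_n -> 'I_N}) (\prod_i A i (f i)) * \det (rowsub f B).
Proof.
have prod_mulmx s : \prod_i (A *m B) i (s i) =
    \sum_(f : {ffun 'I_n -> 'I_N}) \prod_i (A i (f i) * B (f i) (s i)).
  rewrite -(bigA_distr_bigA (fun i k => A i k * B k (s i))).
  by apply: eq_bigr => i _; rewrite mxE.
rewrite [LHS]/(\det _); under eq_bigr => s _ do rewrite prod_mulmx mulr_sumr.
rewrite exchange_big; apply: eq_bigr => f _ /=.
rewrite /(\det _) mulr_sumr; apply: eq_bigr => s _.
by rewrite big_split /= mulrCA; congr (_ * (_ * _)); apply: eq_bigr => i _; rewrite mxE.
Qed.

Lemma det_rowsub_noninj B (f : {ffun 'I_n -> 'I_N}) :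
  ~~ injectiveb f -> \det (rowsub f B) = 0.
Proof.
case/injectivePn => i [j neq_ij eq_f].
by apply: (determinant_alternate neq_ij) => k; rewrite !mxE eq_f.
Qed.

Lemma cauchy_binet A B :
  \det (A *m B) =
  \sum_(f : {ffun 'I_n -> 'I_N} | decreasing f) \det (colsub f A) * \det (rowsub f B).
Proof.
rewrite det_mulmx_expand (bigID (fun f : {ffun 'I_n -> 'I_N} => injectiveb f)) /=.
rewrite [X in _ + X]big1 ?addr0 => [|f /(det_rowsub_noninj B) ->]; last by rewrite mulr0.
rewrite big_injective_decreasing; apply: eq_bigr => g _.
rewrite [\det (colsub g A)]/(\det _) mulr_suml; apply: eq_bigr => s _.
have -> : rowsub [ffun i => g (s i)] B = row_perm s (rowsub g B).
  by apply/matrixP => i j; rewrite !mxE ffunE.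
rewrite det_row_perm mulrCA mulrA; congr (_ * _ * _).
by apply: eq_bigr => i _; rewrite mxE ffunE.
Qed.

End CauchyBinet.

Section YoungDiagrams.
Variables n D : nat.
Implicit Types (l nu : {ffun 'I_n -> 'I_D.+1}) (f : {ffun 'I_n -> 'I_(n + D)}).

Lemma beta_subproof l i : (l i + (n - i.+1) < n + D)%N.
Proof. by have := ltn_ord (l i); have := ltn_ord i; lia. Qed.

Definition beta l : {ffun 'I_n -> 'I_(n + D)} := [ffun i => Ordinal (beta_subproof l i)].

Lemma betaE l i : beta l i = (l i + (n - i.+1))%N :> nat.
Proof. by rewrite ffunE. Qed.

Definition unbeta f : {ffun 'I_n -> 'I_D.+1} := [ffun i => inord (f i - (n - i.+1))].

Lemma betaK : cancel beta unbeta.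
Proof.
by move=> l; apply/ffunP => i; apply: val_inj => /=; rewrite ffunE betaE addnK inord_val.
Qed.

Lemma unbetaK f : decreasing f -> beta (unbeta f) = f.
Proof.
move=> dec; apply/ffunP => i; apply: val_inj => /=; rewrite betaE ffunE.
have lt_in := ltn_ord i.
have n_gt0 : (0 < n)%N by lia.
have last_lt : (n.-1 < n)%N by lia.
have le_i_last : (i <= Ordinal last_lt)%N by rewrite /=; lia.
have := decreasing_gap dec (leq0n i : (Ordinal n_gt0 <= i)%N).
have := decreasing_gap dec le_i_last; have := ltn_ord (f (Ordinal n_gt0)).
by rewrite /= => *; rewrite inordK; lia.
Qed.

Lemma young_beta l : young l = decreasing (beta l).
Proof.
apply/forallP/decreasingP => [young_l i j lt_ij | dec i].
  have /forallP/(_ j)/implyP/(_ (ltnW lt_ij)) := young_l i.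
  by rewrite !betaE; have := ltn_ord j; lia.
apply/forallP => j; apply/implyP => le_ij.
have := decreasing_gap (introT (decreasingP _) dec) le_ij; rewrite !betaE.
by have := ltn_ord j; lia.
Qed.

Lemma big_decreasing_young (R : Type) (idx : R) (op : Monoid.com_law idx)
    (F : {ffun 'I_n -> 'I_(n + D)} -> R) :
  \big[op/idx]_(f | decreasing f) F f = \big[op/idx]_(l | young l) F (beta l).
Proof.
rewrite (reindex_onto beta unbeta unbetaK); apply: eq_bigl => l.
by rewrite betaK eqxx andbT young_beta.
Qed.

End YoungDiagrams.

Definition rev_perm n : 'S_n := perm (@rev_ord_inj n).

Section TruncatedTau.
Variables (D n : nat) (mu : nat -> nat -> CC).
Local Notation RR := {mpoly CC[D + D]}.
Implicit Types (l nu : {ffun 'I_n -> 'I_D.+1}).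

Lemma det_expLam_beta (x : nat -> RR) l :
  \det (\matrix_(i, j) expLam x j (beta l i)) =
  (-1) ^+ rev_perm n * schur (fun i => (l i : nat)) x.
Proof.
rewrite /schur -det_col_perm; congr (\det _); apply/matrixP => i j.
rewrite !mxE /expLam betaE permE /=; congr (pkz x _).
by have := ltn_ord i; have := ltn_ord j; lia.
Qed.

Definition expt_mx : 'M[RR]_(n, n + D) := \matrix_(i, k) expLam (tvar D) i k.
Definition mu_mx : 'M[RR]_(n + D) := \matrix_(k, l) (mu k l)%:MP.
Definition exps_mx : 'M[RR]_(n + D, n) := \matrix_(l, j) expLam (fun r => - svar D r) j l.

Lemma mts_factor : mts D mu n = expt_mx *m (mu_mx *m exps_mx).
Proof.
apply/matrixP => i j; rewrite !mxE; apply: eq_bigr => k _.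
by rewrite !mxE mulr_sumr; apply: eq_bigr => l _; rewrite !mxE mulrA.
Qed.

Lemma det_colsub_expt l :
  \det (colsub (beta l) expt_mx) = (-1) ^+ rev_perm n * schur (fun i => (l i : nat)) (tvar D).
Proof. by rewrite -det_tr -det_expLam_beta; congr (\det _); apply/matrixP => i j; rewrite !mxE. Qed.

Lemma det_rowsub_exps l :
  \det (rowsub (beta l) exps_mx) =
  (-1) ^+ rev_perm n * schur (fun i => (l i : nat)) (fun r => - svar D r).
Proof. by rewrite -det_expLam_beta; congr (\det _); apply/matrixP => i j; rewrite !mxE. Qed.

Lemma det_mxsub_mu l nu :
  \det (colsub (beta nu) (rowsub (beta l) mu_mx)) =
  (\det (mlamnu mu (fun i => (l i : nat)) (fun j => (nu j : nat))))%:MP.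
Proof.
rewrite -det_map_mx; congr (\det _); apply/matrixP => i j.
by rewrite !mxE !betaE.
Qed.

Lemma det_mts : \det (mts D mu n) = rhs D mu n.
Proof.
rewrite mts_factor cauchy_binet big_decreasing_young /rhs; apply: eq_bigr => l _.
rewrite -mul_rowsub_mx cauchy_binet big_decreasing_young mulr_sumr.
apply: eq_bigr => nu _; rewrite det_colsub_expt det_mxsub_mu det_rowsub_exps.
set e := (-1) ^+ _; have sqr_e : e * e = 1 by rewrite -expr2 sqrr_sign.
by rewrite [_ * (e * _)]mulrCA mulrACA sqr_e mul1r mulrCA mulrA.
Qed.

End TruncatedTau.

Unset Implicit Arguments.

Theorem mainTheorem11 (mu : nat -> nat -> CC) (n : nat) :
  (0 < n)%N ->
  forall (D : nat) (m : 'X_{1..D + D}), (weight m <= D)%N ->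
    (\det (mts D mu n))@_m = (rhs D mu n)@_m.
Proof.
(* The truncated identity holds exactly. *)
by move=> _ D m _; rewrite det_mts.
Qed.
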